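(* Let $\lambda,\mu\in\mathbb R$ with $\mu>0$, $3\lambda+2\mu>0$, let $0<\theta_0<\pi/2$ and $$B_{\theta_0}=\{\beta=|\beta|e^{i\theta}\in\mathbb C:\ |\theta|\le\theta_0\ \text{or}\ |\theta-\pi|\le\theta_0\}.$$ With $A=\begin{pmatrix}\lambda+2\mu&0\\0&\mu\end{pmatrix}$, $B=\begin{pmatrix}0&\lambda+\mu\\\lambda+\mu&0\end{pmatrix}$, $C=\begin{pmatrix}\mu&0\\0&\lambda+2\mu\end{pmatrix}$, let $L_0(\xi,\beta)=A\xi^2+\beta B\xi+\beta^2C$. Then: (i) for all $\xi\in\mathbb R$ and $\beta\in B_{\theta_0}$ with $|\xi|+|\beta|\neq0$, $\det L_0(\xi,\beta)\neq0$; (ii) for every $\beta\in B_{\theta_0}$, $\beta\neq0$, the roots (counted with multiplicity) of the degree-four polynomial equation $\det L_0(z,\beta)=0$ in $z\in\mathbb C$ are equally distributed between the open upper and open lower half-planes (two in each). Consequently the differential operator $L(D_1,\beta)=AD_1^2+\beta BD_1+\beta^2C-\omega^2\rho I$ ($D_1=-i\partial_1$, $\omega,\rho>0$), of order $s=2$ acting on $\mathbb C^2$-valued functions with $r=2=Ns/2$ boundary conditions, satisfies the Agranovich–Vishik ellipticity-with-parameter condition on the parameter set $B_{\theta_0}$.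
   Context: The Agranovich–Vishik ellipticity-with-parameter condition for a one-dimensional $N\times N$ system of order $s$ with principal symbol $L_0(\xi,q)$, parameter $q$ in a set $Q$, means: $\det L_0(\xi,q)\ne0$ for real $\xi$, $q\in Q$, $|\xi|+|q|\ne0$; for $q\in Q\setminus\{0\}$ the roots in $z$ of $\det L_0(z,q)=0$ are equally distributed between the upper and lower half-planes; and the number of boundary conditions is $Ns/2$. *)

From HB Require Import structures.
From mathcomp Require Import all_boot all_order all_algebra.
From mathcomp Require Import reals trigo.
From mathcomp Require Export complex.
Set Implicit Arguments. Unset Strict Implicit. Unset Printing Implicit Defensive.
Import Order.TTheory GRing.Theory Num.Theory.
Local Open Scope ring_scope.
Local Open Scope complex_scope.

Section Defs.
Variable R : realType.
Local Notation C := R[i].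

Definition in_Bsector (th0 : R) (b : C) : Prop :=
  exists r th : R, 0 <= r /\ b = (r * cos th) +i* (r * sin th) /\
    (`|th| <= th0 \/ `|th - pi| <= th0).

Definition Amx (lam mu : R) : 'M[C]_2 :=
  \matrix_(i < 2, j < 2)
    (if i == j then (if i == 0 :> nat then (lam + 2 * mu)%:C else mu%:C) else 0).
Definition Bmx (lam mu : R) : 'M[C]_2 :=
  \matrix_(i < 2, j < 2) (if i == j then 0 else (lam + mu)%:C).
Definition Cmx (lam mu : R) : 'M[C]_2 :=
  \matrix_(i < 2, j < 2)
    (if i == j then (if i == 0 :> nat then mu%:C else (lam + 2 * mu)%:C) else 0).

Definition L0mat (lam mu : R) (xi b : C) : 'M[C]_2 :=
  xi ^+ 2 *: Amx lam mu + (b * xi) *: Bmx lam mu + b ^+ 2 *: Cmx lam mu.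

Definition L0poly (lam mu : R) (b : C) : 'M[{poly C}]_2 :=
  \matrix_(i < 2, j < 2)
    ((Amx lam mu i j)%:P * 'X^2 + (b * Bmx lam mu i j)%:P * 'X
       + (b ^+ 2 * Cmx lam mu i j)%:P).

Definition roots_mult (p : {poly C}) (rs : seq C) : Prop :=
  p != 0 /\ p = lead_coef p *: \prod_(z <- rs) ('X - z%:P).

Definition upper (z : C) : bool := 0 < Im z.
Definition lower (z : C) : bool := Im z < 0.

Definition equally_distributed (p : {poly C}) : Prop :=
  exists rs, roots_mult p rs /\ count upper rs = count lower rs /\
    (count upper rs + count lower rs = size rs)%N.

(* Agranovich--Vishik ellipticity with parameter for an N x N system of order s
   with principal symbol L0 (a polynomial matrix in z for each parameter q),
   parameter set Q, and r boundary conditions. *)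
Definition AV_condition (N s r : nat) (Q : C -> Prop)
    (L0 : C -> 'M[{poly C}]_N) : Prop :=
  (forall (xi : R) (q : C), Q q -> (xi != 0) || (q != 0) ->
      \det (map_mx (horner^~ xi%:C) (L0 q)) != 0) /\
  (forall q : C, Q q -> q != 0 -> equally_distributed (\det (L0 q))) /\
  (2 * r = N * s)%N.

End Defs.

(* The determinant of the symbol factors as
     det L_0(z, beta) = (lam + 2 mu) mu (z^2 + beta^2)^2,
   with (lam + 2 mu) mu > 0 because mu > 0 and 3 lam + 2 mu > 0.  Its roots
   are i beta and -i beta, each double.  A nonzero beta in the sector has
   Re beta = |beta| cos theta <> 0, since theta or theta - pi lies in
   (-pi/2, pi/2); hence Im (i beta) = Re beta <> 0 puts one double root in
   each open half-plane, and z^2 + beta^2 <> 0 for real z unless z = beta = 0. *)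

From HB Require Import structures.
From mathcomp Require Import all_boot all_order all_algebra.
From mathcomp Require Import reals trigo complex.
From mathcomp Require Import ring lra.
Import Order.TTheory GRing.Theory Num.Theory.
Local Open Scope ring_scope.
Local Open Scope complex_scope.

Lemma det_mx2 (T : comNzRingType) (A : 'M[T]_2) :
  \det A = A 0 0 * A 1 1 - A 0 1 * A 1 0.
Proof.
rewrite (expand_det_row _ ord0) !big_ord_recl big_ord0 addr0 /cofactor.
rewrite !det_mx11 !mxE /= expr0 expr1 mul1r mulN1r.
have -> : lift ord0 (ord0 : 'I_1) = 1 :> 'I_2 by exact/val_inj.
have -> : lift 1 (ord0 : 'I_1) = 0 :> 'I_2 by exact/val_inj.
by rewrite -[ord0]/(0 : 'I_2) mulrN.
Qed.

Section LameSymbol.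
Variable R : realType.
Local Notation C := R[i].
Implicit Types (lam mu xi : R) (b z : C).

Lemma det_L0poly lam mu b :
  \det (L0poly lam mu b) = ((lam + 2 * mu) * mu)%:C *: ('X^2 + (b ^+ 2)%:P) ^+ 2.
Proof. by rewrite det_mx2 !mxE /= -mul_polyC !(rmorphD, rmorphM, rmorph0); ring. Qed.

Lemma L0poly_horner lam mu b (x : C) :
  map_mx (horner^~ x) (L0poly lam mu b) = L0mat lam mu x b.
Proof.
(* Folding the coefficient matrices keeps [mxE] from unfolding their entries. *)
rewrite /L0mat /L0poly; set A := Amx lam mu; set B := Bmx lam mu; set D := Cmx lam mu.
by apply/matrixP => i j; rewrite !mxE !hornerE /=; ring.
Qed.

Lemma det_L0mat lam mu b (x : C) :
  \det (L0mat lam mu x b) = ((lam + 2 * mu) * mu)%:C * (x ^+ 2 + b ^+ 2) ^+ 2.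
Proof.
rewrite -L0poly_horner (det_map_mx (horner_eval x)) /= det_L0poly.
by rewrite horner_evalE hornerZ !hornerE.
Qed.

Lemma in_Bsector_Re_neq0 th0 b :
  th0 < pi / 2 -> in_Bsector th0 b -> b != 0 -> complex.Re b != 0.
Proof.
move=> th0_lt [r [th [r_ge0 [-> th_near]]]] b_neq0 /=.
have r_neq0 : r != 0 by apply: contraNneq b_neq0 => ->; rewrite !mul0r.
have cos_gt0 t : `|t| <= th0 -> 0 < cos t.
  by rewrite ler_norml => /andP [? ?]; apply: cos_gt0_pihalf; apply/andP; split; lra.
rewrite mulf_neq0 //; case: th_near => [/cos_gt0/gt_eqF -> //|/cos_gt0].
have -> : cos th = - cos (th - pi) by rewrite -cosDpi subrK.
by rewrite oppr_eq0 => /gt_eqF ->.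
Qed.

Lemma real_sqrD_sqr_neq0 xi b : complex.Re b != 0 -> xi%:C ^+ 2 + b ^+ 2 != 0.
Proof.
case: b => x y /= x_neq0; apply/negP; rewrite !expr2 eq_complex /=.
case/andP => /eqP re_eq0 /eqP im_eq0.
have xy_eq0 : x * y = 0 by lra.
have y_eq0 : y = 0 by move/eqP: xy_eq0; rewrite mulf_eq0 (negbTE x_neq0) => /eqP.
have x2_gt0 : 0 < x * x by rewrite -expr2 exprn_even_gt0.
by move: re_eq0; rewrite y_eq0; nra.
Qed.

Lemma det_L0mat_neq0 lam mu th0 xi b :
  0 < mu -> 0 < lam + 2 * mu -> th0 < pi / 2 ->
  in_Bsector th0 b -> (xi != 0) || (b != 0) -> \det (L0mat lam mu xi%:C b) != 0.
Proof.
move=> mu_gt0 lam2mu_gt0 th0_lt b_in xi_b_neq0; rewrite det_L0mat mulf_neq0 ?expf_neq0 //.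
  by rewrite eq_complex /= negb_and gt_eqF // mulr_gt0.
have [b_eq0|b_neq0] := eqVneq b 0; last first.
  by apply: real_sqrD_sqr_neq0; apply: in_Bsector_Re_neq0 b_in b_neq0.
move: xi_b_neq0; rewrite b_eq0 eqxx orbF expr0n addr0 => xi_neq0.
by rewrite expf_neq0 // eq_complex /= negb_and xi_neq0.
Qed.

Lemma upperE z : upper z = (0 < complex.Im z).
Proof. by rewrite /upper -complexIm ltcE /= eqxx. Qed.

Lemma lowerE z : lower z = (complex.Im z < 0).
Proof. by rewrite /lower -complexIm ltcE /= eqxx. Qed.

Lemma count_upper_lower_opp z : complex.Im z != 0 ->
  count (@upper R) [:: z; - z] = 1%N /\ count (@lower R) [:: z; - z] = 1%N.
Proof.
case: z => x y /= y_neq0; rewrite !upperE !lowerE /= oppr_gt0 oppr_lt0.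
by case: ltgtP y_neq0.
Qed.

Lemma Im_mulic b : complex.Im ('i * b) = complex.Re b.
Proof. by rewrite -complexiE; case: b => x y /=; ring. Qed.

Lemma addX2_sqr_prod_XsubC b :
  'X^2 + (b ^+ 2)%:P = \prod_(z <- [:: 'i * b; - ('i * b)]) ('X - z%:P).
Proof.
have -> : b ^+ 2 = - ('i * b) ^+ 2 by rewrite exprMn sqrCi mulN1r opprK.
by rewrite !big_cons big_nil !(rmorphN, rmorphXn) /=; ring.
Qed.

Lemma roots_mult_scale_prod (c : C) (rs : seq C) :
  c != 0 -> roots_mult (c *: \prod_(z <- rs) ('X - z%:P)) rs.
Proof.
move=> c_neq0; have rs_monic := monic_prod_XsubC rs xpredT (fun z => z).
split; first by rewrite scale_poly_eq0 negb_or c_neq0 monic_neq0.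
by rewrite lead_coefZ (monicP rs_monic) mulr1.
Qed.

Lemma L0poly_roots lam mu b :
  0 < mu -> 0 < lam + 2 * mu -> complex.Re b != 0 ->
  exists rs : seq C, roots_mult (\det (L0poly lam mu b)) rs /\
    size rs = 4%N /\ count (@upper R) rs = 2%N /\ count (@lower R) rs = 2%N.
Proof.
move=> mu_gt0 lam2mu_gt0 Re_b_neq0; set pair := [:: 'i * b; - ('i * b)].
exists (pair ++ pair); split.
  rewrite det_L0poly addX2_sqr_prod_XsubC expr2 -big_cat; apply: roots_mult_scale_prod.
  by rewrite eq_complex /= negb_and gt_eqF // mulr_gt0.
have [|up lo] := count_upper_lower_opp ('i * b); first by rewrite Im_mulic.
by rewrite !count_cat up lo.
Qed.
End LameSymbol.

Theorem lemma1 (R : realType) (lam mu th0 : R) :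
  0 < mu -> 0 < 3 * lam + 2 * mu -> 0 < th0 -> th0 < pi / 2 ->
  (forall (xi : R) (b : R[i]), in_Bsector th0 b -> (xi != 0) || (b != 0) ->
      \det (L0mat lam mu xi%:C b) != 0) /\
  (forall b : R[i], in_Bsector th0 b -> b != 0 ->
      exists rs : seq R[i], roots_mult (\det (L0poly lam mu b)) rs /\
        size rs = 4%N /\ count (@upper R) rs = 2%N /\ count (@lower R) rs = 2%N) /\
  @AV_condition R 2 2 2 (in_Bsector th0) (L0poly lam mu).
Proof.
move=> mu_gt0 lam_mu_gt0 _ th0_lt; have lam2mu_gt0 : 0 < lam + 2 * mu by lra.
have roots b b_in b_neq0 := @L0poly_roots R lam mu b mu_gt0 lam2mu_gt0
  (@in_Bsector_Re_neq0 R th0 b th0_lt b_in b_neq0).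
split; first by move=> xi b; apply: det_L0mat_neq0.
split; first exact: roots.
split; last split; last by [].
  by move=> xi b; rewrite L0poly_horner; apply: det_L0mat_neq0.
move=> b b_in b_neq0; have [rs [rs_roots [rs_size [up lo]]]] := roots b b_in b_neq0.
by exists rs; rewrite up lo rs_size.
Qed.
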